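(* Consider the inexact value iteration $\hat P_{i+1}=\mathcal R(\hat P_i,S)+\Delta_i$, $i\in\mathbb Z_+$, with $\hat P_0\in\mathbb S^n_+$ and disturbances $\Delta_i\in\mathbb S^n$, and let $\|\Delta\|_\infty=\sup_{i\in\mathbb Z_+}\|\Delta_i\|_2$. There exist a $\mathcal{KL}$-function $\beta$ and a $\mathcal K$-function $\gamma$ such that for every disturbance sequence with $\|\Delta\|_\infty<\lambda_{\min}(S)$, every $\hat P_0\in\mathbb S^n_+$ and every $i\in\mathbb Z_+$, $$\|\hat P_i-P^*\|_2\le\beta(\|\hat P_0-P^*\|_2,i)+\gamma(\|\Delta\|_\infty).$$
   Context: Let $n,m\ge 1$, $A\in\mathbb R^{n\times n}$, $B\in\mathbb R^{n\times m}$, $S\in\mathbb S^n_{++}$, $R\in\mathbb S^m_{++}$, with $(A,B)$ stabilizable. Here $\mathbb S^n$, $\mathbb S^n_+$, $\mathbb S^n_{++}$ denote the real symmetric, symmetric positive semidefinite, and symmetric positive definite $n\times n$ matrices; $\|\cdot\|_2$ is the spectral norm; $\lambda_{\min}$ is the smallest eigenvalue. For $P\in\mathbb S^n_+$ and $S'\in\mathbb S^n$, the Riccati operator is $\mathcal R(P,S')=A^\top PA-A^\top PB(R+B^\top PB)^{-1}B^\top PA+S'$. $P^*\in\mathbb S^n_{++}$ denotes the unique positive definite solution of $P=\mathcal R(P,S)$. A function $\gamma:\mathbb R_+\to\mathbb R_+$ is of class $\mathcal K$ if it is continuous, strictly increasing and $\gamma(0)=0$. A function $\beta:\mathbb R_+\times\mathbb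 Z_+\to\mathbb R_+$ is of class $\mathcal{KL}$ if $\beta(\cdot,i)$ is of class $\mathcal K$ for each fixed $i$, and $\beta(r,i)$ decreases to $0$ as $i\to\infty$ for each fixed $r\ge 0$. *)

From HB Require Import structures.
From mathcomp Require Import all_boot all_order all_algebra.
From mathcomp Require Import all_classical all_reals all_analysis.
From mathcomp Require Import complex.
Set Implicit Arguments. Unset Strict Implicit. Unset Printing Implicit Defensive.
Import Order.TTheory GRing.Theory Num.Theory.
Local Open Scope ring_scope.
Local Open Scope classical_set_scope.
Import numFieldNormedType.Exports.

Section Defs.
Variable R : realType.

Definition sym_mx n (M : 'M[R]_n) : Prop := M^T = M.

Definition psd n (M : 'M[R]_n) : Prop :=
  sym_mx M /\ forall x : 'cV[R]_n, 0 <= (x^T *m M *m x) 0 0.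

Definition pd n (M : 'M[R]_n) : Prop :=
  sym_mx M /\ forall x : 'cV[R]_n, x != 0 -> 0 < (x^T *m M *m x) 0 0.

Definition vnorm n (x : 'cV[R]_n) : R := Num.sqrt (\sum_i x i 0 ^+ 2).

Definition opnorm m n (M : 'M[R]_(m, n)) : R :=
  sup [set vnorm (M *m x) | x in [set x : 'cV[R]_n | vnorm x <= 1]].

Definition lambda_min n (M : 'M[R]_n) : R := inf [set a : R | eigenvalue M a].

Definition schur_stable n (M : 'M[R]_n) : Prop :=
  forall z : R[i], eigenvalue (map_mx (real_complex R) M) z -> `|z| < 1.

Definition stabilizable n m (A : 'M[R]_n) (B : 'M[R]_(n, m)) : Prop :=
  exists K : 'M[R]_(m, n), schur_stable (A + B *m K).

Definition riccati n m (A : 'M[R]_n) (B : 'M[R]_(n, m)) (Rw : 'M[R]_m)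
  (P S' : 'M[R]_n) : 'M[R]_n :=
  A^T *m P *m A - A^T *m P *m B *m invmx (Rw + B^T *m P *m B) *m B^T *m P *m A + S'.

Definition class_K (g : R -> R) : Prop :=
  g 0 = 0 /\
  (forall r, 0 <= r -> 0 <= g r) /\
  {within `[0, +oo[%classic, continuous g} /\
  (forall r s, 0 <= r -> r < s -> g r < g s).

Definition class_KL (b : R -> nat -> R) : Prop :=
  (forall i, class_K (fun r => b r i)) /\
  (forall r, 0 <= r ->
     (forall i j, (i <= j)%N -> b r j <= b r i) /\
     (fun i => b r i) @ \oo --> 0).

Definition supnorm n (D : nat -> 'M[R]_n) : \bar R :=
  ereal_sup (range (fun i => (opnorm (D i))%:E)).

End Defs.

From HB Require Import structures.
From mathcomp Require Import all_boot all_order all_algebra.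
From mathcomp Require Import all_classical all_reals all_analysis.
From mathcomp Require Import ring lra.
Set Implicit Arguments. Unset Strict Implicit. Unset Printing Implicit Defensive.
Import Order.TTheory GRing.Theory Num.Theory.
Import numFieldNormedType.Exports.
Local Open Scope ring_scope.
Local Open Scope classical_set_scope.

(* Measure the error of [P] relative to [P*]: [-c P* <= P - P* <= c P*].
   Comparing [R(P, S)] with [P* = R(P*, S)] along a common optimal feedback
   gain gives [R(P, S) <= (1 + c) P* - c S] and the matching lower bound.
   Since [S >= eps P*] with [eps = lambda_min S / max(|P*|, lambda_min S)],
   one step of the iteration with a disturbance [-eta S <= Delta <= eta S]
   turns [c] into [(1 - eps) c + eps eta], so that [c_i <= (1 - eps)^i c_0 + eta].
   Passing between relative errors and spectral norms costs the factor
   [max(|P*|, lambda_min S) / lambda_min S], and [eta = |Delta| / lambda_min S]. *)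

(** * Quadratic forms *)

Section QuadraticForms.
Variable R : realType.
Implicit Types (n m : nat) (a : R).

Definition dot n (x y : 'cV[R]_n) : R := (x^T *m y) 0 0.
Definition nrm2 n (x : 'cV[R]_n) : R := \sum_i x i 0 ^+ 2.
Definition qf n (M : 'M[R]_n) (x : 'cV[R]_n) : R := (x^T *m M *m x) 0 0.

Lemma dotE n (x y : 'cV[R]_n) : dot x y = \sum_i x i 0 * y i 0.
Proof. by rewrite /dot !mxE; apply: eq_bigr => i _; rewrite mxE. Qed.

Lemma dotC n (x y : 'cV[R]_n) : dot x y = dot y x.
Proof. by rewrite !dotE; apply: eq_bigr => i _; rewrite mulrC. Qed.

Lemma dotDl n (x y z : 'cV[R]_n) : dot (x + y) z = dot x z + dot y z.
Proof. by rewrite !dotE -big_split; apply: eq_bigr => i _; rewrite mxE mulrDl. Qed.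

Lemma dotDr n (x y z : 'cV[R]_n) : dot z (x + y) = dot z x + dot z y.
Proof. by rewrite dotC dotDl !(dotC z). Qed.

Lemma dotZl n a (x z : 'cV[R]_n) : dot (a *: x) z = a * dot x z.
Proof. by rewrite !dotE mulr_sumr; apply: eq_bigr => i _; rewrite mxE mulrA. Qed.

Lemma dotZr n a (x z : 'cV[R]_n) : dot z (a *: x) = a * dot z x.
Proof. by rewrite dotC dotZl dotC. Qed.

Lemma dotNl n (x z : 'cV[R]_n) : dot (- x) z = - dot x z.
Proof. by rewrite -scaleN1r dotZl mulN1r. Qed.

Lemma dotNr n (x z : 'cV[R]_n) : dot z (- x) = - dot z x.
Proof. by rewrite -scaleN1r dotZr mulN1r. Qed.

Lemma dot0l n (z : 'cV[R]_n) : dot 0 z = 0.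
Proof. by rewrite /dot trmx0 mul0mx mxE. Qed.

Lemma dot0r n (z : 'cV[R]_n) : dot z 0 = 0.
Proof. by rewrite dotC dot0l. Qed.

Lemma dot_mulmx n m (C : 'M[R]_(n, m)) x y : dot x (C *m y) = dot (C^T *m x) y.
Proof. by rewrite /dot trmx_mul trmxK mulmxA. Qed.

Lemma dot_sym n (M : 'M[R]_n) x y : M^T = M -> dot x (M *m y) = dot (M *m x) y.
Proof. by move=> sM; rewrite dot_mulmx sM. Qed.

Lemma nrm2E n (x : 'cV[R]_n) : nrm2 x = dot x x.
Proof. by rewrite dotE; apply: eq_bigr => i _; rewrite expr2. Qed.

Lemma nrm2_ge0 n (x : 'cV[R]_n) : 0 <= nrm2 x.
Proof. by apply: sumr_ge0 => i _; exact: sqr_ge0. Qed.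

Lemma nrm2_gt0 n (x : 'cV[R]_n) : x != 0 -> 0 < nrm2 x.
Proof.
apply: contraNT; rewrite -leNgt => x_le0; apply/eqP/matrixP => i j.
rewrite (ord1 j) mxE; apply/eqP; rewrite -sqrf_eq0.
have /psumr_eq0P-> // : nrm2 x = 0 by apply/eqP; rewrite eq_le x_le0 nrm2_ge0.
by move=> k _; exact: sqr_ge0.
Qed.

Lemma nrm20 n : nrm2 (0 : 'cV[R]_n) = 0.
Proof. by rewrite nrm2E dot0l. Qed.

Lemma nrm2Z n a (x : 'cV[R]_n) : nrm2 (a *: x) = a ^+ 2 * nrm2 x.
Proof. by rewrite !nrm2E dotZl dotZr mulrA expr2. Qed.

Lemma parallelogram n (x y : 'cV[R]_n) :
  nrm2 (x + y) + nrm2 (x - y) = 2 * (nrm2 x + nrm2 y).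
Proof. by rewrite !nrm2E !dotDl !dotDr !dotNl !dotNr (dotC y x); ring. Qed.

Lemma dot_sqr_le n (x y : 'cV[R]_n) : dot x y ^+ 2 <= nrm2 x * nrm2 y.
Proof.
have [->|x_neq0] := eqVneq x 0; first by rewrite dot0l nrm20 expr0n mul0r.
have x_gt0 := nrm2_gt0 x_neq0; set t := dot x y / nrm2 x.
have tx : t * nrm2 x = dot x y by rewrite divfK ?gt_eqF.
have := nrm2_ge0 (t *: x - y).
rewrite nrm2E !dotDl !dotDr !dotNl !dotNr !dotZl !dotZr -!nrm2E (dotC y x).
by nra.
Qed.

Lemma qfE n (M : 'M[R]_n) x : qf M x = dot x (M *m x).
Proof. by rewrite /qf /dot mulmxA. Qed.

Lemma qfD n (M N : 'M[R]_n) x : qf (M + N) x = qf M x + qf N x.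
Proof. by rewrite !qfE mulmxDl dotDr. Qed.

Lemma qfB n (M N : 'M[R]_n) x : qf (M - N) x = qf M x - qf N x.
Proof. by rewrite qfD !qfE mulNmx dotNr. Qed.

Lemma qf0 n (M : 'M[R]_n) : qf M 0 = 0.
Proof. by rewrite qfE mulmx0 dot0r. Qed.

Lemma qf_scalar n a (x : 'cV[R]_n) : qf a%:M x = a * nrm2 x.
Proof. by rewrite qfE mul_scalar_mx dotZr nrm2E. Qed.

Lemma qf_mulmx n m (C : 'M[R]_(m, n)) (M : 'M[R]_m) x :
  qf (C^T *m M *m C) x = qf M (C *m x).
Proof. by rewrite /qf trmx_mul !mulmxA. Qed.

Lemma psd_qf_ge0 n (M : 'M[R]_n) : psd M -> forall x, 0 <= qf M x.
Proof. by case. Qed.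

Lemma pd_psd n (M : 'M[R]_n) : pd M -> psd M.
Proof.
case=> sM M_gt0; split => // x; have [->|x_neq0] := eqVneq x 0.
  by rewrite -/(qf M 0) qf0.
exact/ltW/M_gt0.
Qed.

Lemma qf_trmx n (M : 'M[R]_n) (v : 'rV[R]_n) : qf M v^T = (v *m M *m v^T) 0 0.
Proof. by rewrite /qf trmxK. Qed.

Lemma qf_symD n (M : 'M[R]_n) x y : M^T = M ->
  qf M (x + y) = qf M x + 2 * dot y (M *m x) + qf M y.
Proof.
move=> sM; rewrite !qfE mulmxDr !dotDl !dotDr (dot_sym x y sM) (dotC (M *m x)).
by ring.
Qed.

Lemma polarization n (M : 'M[R]_n) x y : M^T = M ->
  qf M (x + y) - qf M (x - y) = 4 * dot y (M *m x).
Proof.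
move=> sM; rewrite !qf_symD // dotNl [qf M (- y)]qfE mulmxN dotNl dotNr opprK -qfE.
by ring.
Qed.

End QuadraticForms.

(** * Spectral norm *)

Section OperatorNorm.
Variable R : realType.
Implicit Types (n m : nat) (a c : R).

Lemma vnorm_sqr n (x : 'cV[R]_n) : vnorm x ^+ 2 = nrm2 x.
Proof. by rewrite sqr_sqrtr // nrm2_ge0. Qed.

Lemma vnorm_ge0 n (x : 'cV[R]_n) : 0 <= vnorm x.
Proof. exact: sqrtr_ge0. Qed.

Lemma vnorm0 n : vnorm (0 : 'cV[R]_n) = 0.
Proof. by rewrite /vnorm -/(nrm2 _) nrm20 sqrtr0. Qed.

Lemma vnormZ n a (x : 'cV[R]_n) : vnorm (a *: x) = `|a| * vnorm x.
Proof. by rewrite /vnorm -!/(nrm2 _) nrm2Z sqrtrM ?sqr_ge0 // sqrtr_sqr. Qed.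

Lemma vnorm_le_nrm2 n (x : 'cV[R]_n) c : 0 <= c -> nrm2 x <= c ^+ 2 -> vnorm x <= c.
Proof. by move=> c0 xc; rewrite -(ger0_norm c0) -sqrtr_sqr ler_sqrt ?sqr_ge0. Qed.

Lemma normr_dot_le n (x y : 'cV[R]_n) : `|dot x y| <= vnorm x * vnorm y.
Proof.
rewrite -ler_sqr ?nnegrE ?mulr_ge0 ?vnorm_ge0 // real_normK ?num_real //.
by rewrite exprMn !vnorm_sqr dot_sqr_le.
Qed.

Lemma nrm2_mulmx_le m n (M : 'M[R]_(m, n)) x :
  nrm2 (M *m x) <= (\sum_i nrm2 (row i M)^T) * nrm2 x.
Proof.
rewrite mulr_suml; apply: ler_sum => i _.
have -> : (M *m x) i 0 = dot (row i M)^T x.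
  by rewrite dotE mxE; apply: eq_bigr => j _; rewrite !mxE.
exact: dot_sqr_le.
Qed.

Lemma has_sup_opnorm m n (M : 'M[R]_(m, n)) :
  has_sup [set vnorm (M *m x) | x in [set x : 'cV[R]_n | vnorm x <= 1]].
Proof.
split; first by exists (vnorm (M *m 0)), 0 => //=; rewrite vnorm0.
set F := \sum_i nrm2 (row i M)^T.
have F0 : 0 <= F by apply: sumr_ge0 => i _; exact: nrm2_ge0.
exists (Num.sqrt F) => _ [x /= x_le1 <-].
rewrite ler_sqrt //; apply: le_trans (nrm2_mulmx_le M x) _.
rewrite -[leRHS]mulr1 ler_wpM2l //.
by rewrite -vnorm_sqr -(expr1n R 2) ler_sqr ?nnegrE ?vnorm_ge0.
Qed.

Lemma vnorm_mulmx_le m n (M : 'M[R]_(m, n)) x :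
  vnorm (M *m x) <= opnorm M * vnorm x.
Proof.
have [->|x_neq0] := eqVneq x 0; first by rewrite mulmx0 !vnorm0 mulr0.
have x_gt0 : 0 < vnorm x by rewrite sqrtr_gt0 nrm2_gt0.
set y := (vnorm x)^-1 *: x.
have y1 : vnorm y = 1 by rewrite vnormZ ger0_norm ?invr_ge0 ?vnorm_ge0 // mulVf ?gt_eqF.
have : vnorm (M *m y) <= opnorm M.
  by apply: sup_upper_bound; [exact: has_sup_opnorm | exists y => //=; rewrite y1].
rewrite -scalemxAr vnormZ ger0_norm ?invr_ge0 ?vnorm_ge0 //.
by rewrite mulrC ler_pdivrMr.
Qed.

Lemma opnorm_ge0 m n (M : 'M[R]_(m, n)) : 0 <= opnorm M.
Proof.
rewrite -(vnorm0 m) -(mulmx0 _ M).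
by apply: sup_upper_bound; [exact: has_sup_opnorm | exists 0; rewrite //= vnorm0].
Qed.

Lemma normr_qf_le n (M : 'M[R]_n) x : `|qf M x| <= opnorm M * nrm2 x.
Proof.
rewrite qfE; apply: le_trans (normr_dot_le _ _) _.
have := vnorm_mulmx_le M x; have := vnorm_ge0 x; rewrite -vnorm_sqr; nra.
Qed.

Lemma opnorm_le m n (M : 'M[R]_(m, n)) c :
  0 <= c -> (forall x, nrm2 (M *m x) <= c ^+ 2 * nrm2 x) -> opnorm M <= c.
Proof.
move=> c0 Mc; apply: ge_sup => [|_ [x /= x_le1 <-]].
  by exists (vnorm (M *m 0)), 0 => //=; rewrite vnorm0.
apply: vnorm_le_nrm2 => //; apply: le_trans (Mc x) _.
rewrite -[leRHS]mulr1 ler_wpM2l ?sqr_ge0 //.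
by rewrite -vnorm_sqr -(expr1n R 2) ler_sqr ?nnegrE ?vnorm_ge0.
Qed.

(* Polarization with [y := t *: (M *m x)] turns the bound on the quadratic
   form into [2 t |M x|^2 <= c (|x|^2 + t^2 |M x|^2)]; take [t = 1/c]. *)
Lemma sym_opnorm_le n (M : 'M[R]_n) c : M^T = M -> 0 <= c ->
  (forall x, `|qf M x| <= c * nrm2 x) -> opnorm M <= c.
Proof.
move=> sM c0 Mc; apply: opnorm_le => // x; set a := nrm2 (M *m x).
have key t : 0 < t -> 2 * t * a <= c * (nrm2 x + t ^+ 2 * a).
  move=> t0; set y := t *: (M *m x).
  have ya : dot y (M *m x) = t * a by rewrite dotZl /a nrm2E.
  have y2 : nrm2 y = t ^+ 2 * a by rewrite nrm2Z.
  have := polarization x y sM; have /(congr1 ( *%R c)) := parallelogram x y.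
  move: (Mc (x + y)) (Mc (x - y)); rewrite !ler_norml => /andP[_ ?] /andP[? _].
  rewrite ya y2; lra.
have a0 : 0 <= a := nrm2_ge0 _.
have [c_eq0|c_neq0] := eqVneq c 0.
  by have := key 1 ltr01; rewrite c_eq0; lra.
have c_gt0 : 0 < c by rewrite lt_def c_neq0.
have := key c^-1; rewrite invr_gt0 => /(_ c_gt0) /(ler_wpM2l c0).
have -> : c * (2 * c^-1 * a) = 2 * (c * c^-1) * a by ring.
have -> : c * (c * (nrm2 x + c^-1 ^+ 2 * a)) = c ^+ 2 * nrm2 x + (c * c^-1) ^+ 2 * a.
  by ring.
by rewrite mulfV // expr1n; lra.
Qed.

(* Nonnegativity of the form at [x - t M x], with [t = 1 / |M|]. *)
Lemma nrm2_mulmx_le_qf n (M : 'M[R]_n) x : psd M -> nrm2 (M *m x) <= opnorm M * qf M x.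
Proof.
move=> M_psd; have [sM _] := M_psd; have M_ge0 := psd_qf_ge0 M_psd.
set L := opnorm M; set a := nrm2 (M *m x).
have := vnorm_mulmx_le M x; have := vnorm_ge0 (M *m x); rewrite -/L.
have [-> Mx0 Mx_le0|L_neq0 _ _] := eqVneq L 0.
  by rewrite /a -vnorm_sqr; nra.
have L_gt0 : 0 < L by rewrite lt_def L_neq0 opnorm_ge0.
set t := L^-1; have tL : t * L = 1 by rewrite mulVf.
have := M_ge0 (x + - t *: (M *m x)); rewrite qf_symD // dotZl -nrm2E -/a.
rewrite [qf M (_ *: _)]qfE -scalemxAr dotZl dotZr -qfE.
have : qf M (M *m x) <= L * a by move: (normr_qf_le M (M *m x)); rewrite ler_norml => /andP[].
have := M_ge0 x; have := nrm2_ge0 (M *m x); rewrite -/a => a0 q0 qa h.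
have ta : t * a <= qf M x by nra.
by have := ler_wpM2l (ltW L_gt0) ta; rewrite mulrA [L * t]mulrC tL mul1r.
Qed.

Lemma normr_qf_le_dominated n (M N : 'M[R]_n) c x : 0 < c ->
  (forall y, c * nrm2 y <= qf N y) -> `|qf M x| <= opnorm M / c * qf N x.
Proof.
move=> c_gt0 N_ge; apply: le_trans (normr_qf_le M x) _.
have -> : opnorm M * nrm2 x = opnorm M / c * (c * nrm2 x).
  by rewrite mulrA divfK ?lt0r_neq0.
by apply: ler_wpM2l; [exact: divr_ge0 (opnorm_ge0 M) (ltW c_gt0) | exact: N_ge].
Qed.

End OperatorNorm.

(** * Smallest eigenvalue *)

Section SmallestEigenvalue.
Variable R : realType.
Implicit Types (n : nat) (a c : R).

Lemma psd_unitmx_coercive n (M : 'M[R]_n) : psd M -> M \in unitmx ->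
  exists2 c, 0 < c & forall x, c * nrm2 x <= qf M x.
Proof.
move=> M_psd M_unit; set K := opnorm (invmx M) ^+ 2 * opnorm M.
have K0 : 0 <= K by rewrite mulr_ge0 ?sqr_ge0 ?opnorm_ge0.
exists (K + 1)^-1 => [|x]; first by rewrite invr_gt0; lra.
have x_le : nrm2 x <= K * qf M x.
  rewrite -{1}[x]mul1mx -(mulVmx M_unit) -mulmxA.
  apply: (@le_trans _ _ (opnorm (invmx M) ^+ 2 * nrm2 (M *m x))).
    rewrite -!vnorm_sqr -exprMn ler_sqr ?nnegrE ?mulr_ge0 ?vnorm_ge0 ?opnorm_ge0 //.
    exact: vnorm_mulmx_le.
  by rewrite /K -mulrA; apply: ler_wpM2l; rewrite ?sqr_ge0 ?nrm2_mulmx_le_qf.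
rewrite ler_pdivrMl ?ltr_wpDl //.
by have := psd_qf_ge0 M_psd x; have := nrm2_ge0 x; nra.
Qed.

Lemma qf_gt0_unitmx n (M : 'M[R]_n) :
  (forall x, x != 0 -> 0 < qf M x) -> M \in unitmx.
Proof.
move=> M_gt0; apply: contraT => M_sing.
have /eigenvalueP[v /[!scale0r] vM0 v_neq0] : eigenvalue M 0.
  by rewrite /eigenvalue /eigenspace -scalemx1 scale0r subr0 kermx_eq0 row_free_unit.
by have := M_gt0 v^T; rewrite trmx_eq0 qf_trmx vM0 mul0mx mxE ltxx => /(_ v_neq0).
Qed.

Lemma eigenvalue_qf n (M : 'M[R]_n) a : M^T = M -> eigenvalue M a ->
  exists2 x : 'cV[R]_n, x != 0 & qf M x = a * nrm2 x.
Proof.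
move=> sM /eigenvalueP[v vM v_neq0]; exists v^T; first by rewrite trmx_eq0.
by rewrite qfE -{1}sM -trmx_mul vM linearZ dotZr nrm2E.
Qed.

Definition rayleigh n (M : 'M[R]_n) : set R :=
  [set qf M x / nrm2 x | x in [set x | x != 0]].

Lemma has_lbound_rayleigh n (M : 'M[R]_n) : has_lbound (rayleigh M).
Proof.
exists (- opnorm M) => _ [x /= x_neq0 <-].
rewrite ler_pdivlMr ?nrm2_gt0 //.
by have := normr_qf_le M x; rewrite ler_norml => /andP[+ _]; lra.
Qed.

Lemma rayleigh_neq0 n (M : 'M[R]_n) : (0 < n)%N -> rayleigh M !=set0.
Proof.
move=> n_gt0; set x : 'cV[R]_n := const_mx 1; exists (qf M x / nrm2 x), x => //=.
by apply/eqP => /matrixP/(_ (Ordinal n_gt0) 0); rewrite !mxE => /eqP; rewrite oner_eq0.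
Qed.

Lemma rayleigh_inf_le n (M : 'M[R]_n) x : inf (rayleigh M) * nrm2 x <= qf M x.
Proof.
have [->|x_neq0] := eqVneq x 0; first by rewrite nrm20 qf0 mulr0.
rewrite -ler_pdivlMr ?nrm2_gt0 //.
by apply: ge_inf; [exact: has_lbound_rayleigh | exists x].
Qed.

(* If [M - mu] were invertible it would be coercive, so [mu + c] would be a
   larger lower bound of the Rayleigh quotient. *)
Lemma eigenvalue_rayleigh_inf n (M : 'M[R]_n) : (0 < n)%N -> M^T = M ->
  eigenvalue M (inf (rayleigh M)).
Proof.
move=> n_gt0 sM; set mu := inf (rayleigh M); apply: contraT => not_eig.
have M_mu_unit : M - mu%:M \in unitmx.
  by move: not_eig; rewrite /eigenvalue /eigenspace kermx_eq0 row_free_unit negbK.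
have M_mu_psd : psd (M - mu%:M).
  split=> [|x]; first by rewrite /sym_mx linearB /= tr_scalar_mx sM.
  by rewrite -/(qf _ x) qfB qf_scalar subr_ge0 rayleigh_inf_le.
have [c c_gt0 coercive] := psd_unitmx_coercive M_mu_psd M_mu_unit.
suff : mu + c <= mu by lra.
apply: lb_le_inf => [|_ [x /= x_neq0 <-]]; first exact: rayleigh_neq0.
rewrite ler_pdivlMr ?nrm2_gt0 //.
by have := coercive x; rewrite qfB qf_scalar; lra.
Qed.

Lemma lambda_min_rayleigh n (M : 'M[R]_n) : (0 < n)%N -> M^T = M ->
  lambda_min M = inf (rayleigh M).
Proof.
move=> n_gt0 sM; have mu_eig := eigenvalue_rayleigh_inf n_gt0 sM.
have mu_lb : lbound [set a | eigenvalue M a] (inf (rayleigh M)).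
  move=> a /(eigenvalue_qf sM)[x x_neq0 qx].
  by have := rayleigh_inf_le M x; rewrite qx ler_pM2r ?nrm2_gt0.
apply/eqP; rewrite eq_le; apply/andP; split.
  by apply: (ge_inf _ mu_eig); exists (inf (rayleigh M)).
by apply: lb_le_inf => //; exists (inf (rayleigh M)).
Qed.

Lemma lambda_min_le_qf n (M : 'M[R]_n) x : (0 < n)%N -> M^T = M ->
  lambda_min M * nrm2 x <= qf M x.
Proof. by move=> n_gt0 sM; rewrite lambda_min_rayleigh // rayleigh_inf_le. Qed.

Lemma pd_lambda_min_gt0 n (M : 'M[R]_n) : (0 < n)%N -> pd M -> 0 < lambda_min M.
Proof.
move=> n_gt0 [sM M_gt0]; rewrite lambda_min_rayleigh //.
have [x x_neq0 qx] := eigenvalue_qf sM (eigenvalue_rayleigh_inf n_gt0 sM).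
by have := M_gt0 x x_neq0; rewrite -/(qf M x) qx pmulr_lgt0 ?nrm2_gt0.
Qed.
End SmallestEigenvalue.

(** * The Riccati operator *)

Section Riccati.
Variables (R : realType) (n m : nat) (A : 'M[R]_n) (B : 'M[R]_(n, m)) (Rw : 'M[R]_m).
Hypothesis pd_Rw : pd Rw.

Definition riccati_weight (P : 'M[R]_n) : 'M[R]_m := Rw + B^T *m P *m B.

Definition riccati_gain (P : 'M[R]_n) : 'M[R]_(m, n) :=
  - (invmx (riccati_weight P) *m (B^T *m P *m A)).

Lemma qf_riccati_weight P v : qf (riccati_weight P) v = qf Rw v + qf P (B *m v).
Proof. by rewrite qfD qf_mulmx. Qed.

Lemma riccati_weight_sym P : P^T = P -> (riccati_weight P)^T = riccati_weight P.
Proof.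
by move=> sP; rewrite linearD /= (proj1 pd_Rw) !trmx_mul trmxK sP mulmxA.
Qed.

Lemma riccati_weight_unitmx P : psd P -> riccati_weight P \in unitmx.
Proof.
move=> P_psd; apply: qf_gt0_unitmx => v v_neq0; rewrite qf_riccati_weight.
by rewrite ltr_pwDl ?(psd_qf_ge0 P_psd) ?(proj2 pd_Rw).
Qed.

Lemma riccati_sym P S' : P^T = P -> S'^T = S' -> (riccati A B Rw P S')^T = riccati A B Rw P S'.
Proof.
move=> sP sS; rewrite /riccati !linearD !linearN /= sS !trmx_mul !trmxK sP trmx_inv.
by rewrite -/(riccati_weight P) riccati_weight_sym // /riccati_weight !mulmxA.
Qed.

(* Completion of the square in the input [u = K x]. *)
Lemma qf_riccati_completion P S' K x : P^T = P -> riccati_weight P \in unitmx ->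
  qf (riccati A B Rw P S') x +
    qf (riccati_weight P) (K *m x - riccati_gain P *m x) =
  qf P ((A + B *m K) *m x) + qf Rw (K *m x) + qf S' x.
Proof.
move=> sP W_unit; set W := riccati_weight P.
have sW : W^T = W by exact: riccati_weight_sym.
set z := A *m x; set u := K *m x; set g := B^T *m (P *m z); set w := invmx W *m g.
have -> : K *m x - riccati_gain P *m x = u + w.
  by rewrite /riccati_gain mulNmx opprK /w /g /z !mulmxA.
have Ww : W *m w = g by rewrite /w mulmxA mulmxV // mul1mx.
rewrite /riccati -/W qfD qfB qf_mulmx -/z.
have -> : qf (A^T *m P *m B *m invmx W *m B^T *m P *m A) x = dot g w.
  by rewrite qfE -!mulmxA dot_mulmx trmxK -/z dot_sym // dot_mulmx.
rewrite mulmxDl -mulmxA -/u !qf_symD // qf_riccati_weight.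
have -> : dot (B *m u) (P *m z) = dot u g by rewrite dotC dot_mulmx dotC.
rewrite (dot_sym _ _ sW) Ww [qf W w]qfE Ww (dotC g u) (dotC g w) /z.
by ring.
Qed.

Lemma qf_riccati_le P S' K x : psd P ->
  qf (riccati A B Rw P S') x <= qf P ((A + B *m K) *m x) + qf Rw (K *m x) + qf S' x.
Proof.
move=> P_psd; rewrite -(qf_riccati_completion S' K x (proj1 P_psd)) ?riccati_weight_unitmx //.
by rewrite lerDl qf_riccati_weight addr_ge0 ?(psd_qf_ge0 P_psd) ?(psd_qf_ge0 (pd_psd pd_Rw)).
Qed.

Lemma qf_riccati_gain P S' x : psd P ->
  qf (riccati A B Rw P S') x =
  qf P ((A + B *m riccati_gain P) *m x) + qf Rw (riccati_gain P *m x) + qf S' x.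
Proof.
move=> P_psd; rewrite -(qf_riccati_completion S' _ x (proj1 P_psd)) ?riccati_weight_unitmx //.
by rewrite subrr qf0 addr0.
Qed.

Variables (S Ps : 'M[R]_n).
Hypotheses (psd_Ps : psd Ps) (Ps_fix : Ps = riccati A B Rw Ps S).

Lemma qf_le_fixpoint x : qf S x <= qf Ps x.
Proof.
rewrite Ps_fix qf_riccati_gain //.
by rewrite lerDr addr_ge0 ?(psd_qf_ge0 psd_Ps) ?(psd_qf_ge0 (pd_psd pd_Rw)).
Qed.

(* Both bounds compare [P] and [Ps] along the closed loop of one optimal
   gain: that of [Ps] for the upper bound, that of [P] for the lower one. *)
Lemma qf_riccati_le_scale P t x : psd P -> 1 <= t -> (forall y, qf P y <= t * qf Ps y) ->
  qf (riccati A B Rw P S) x <= t * qf Ps x - (t - 1) * qf S x.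
Proof.
move=> P_psd t_ge1 P_le; set K := riccati_gain Ps.
have := qf_riccati_gain S x psd_Ps; rewrite -Ps_fix -/K.
have := qf_riccati_le S K x P_psd; have := P_le ((A + B *m K) *m x).
have := psd_qf_ge0 (pd_psd pd_Rw) (K *m x); nra.
Qed.

Lemma qf_riccati_ge_scale P s x : psd P -> 0 <= s <= 1 -> (forall y, s * qf Ps y <= qf P y) ->
  s * qf Ps x + (1 - s) * qf S x <= qf (riccati A B Rw P S) x.
Proof.
move=> P_psd /andP[s_ge0 s_le1] P_ge; set K := riccati_gain P.
have := qf_riccati_gain S x P_psd; rewrite -/K.
have := qf_riccati_le S K x psd_Ps; rewrite -Ps_fix.
have := P_ge ((A + B *m K) *m x); have := psd_qf_ge0 (pd_psd pd_Rw) (K *m x); nra.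
Qed.

Lemma qf_perturbed_riccati_le eps eta P D c x :
  0 <= eps -> (forall y, eps * qf Ps y <= qf S y) -> 0 <= eta <= c -> psd P ->
  (forall y, qf P y <= (1 + c) * qf Ps y) -> (forall y, qf D y <= eta * qf S y) ->
  qf (riccati A B Rw P S + D) x <= (1 + ((1 - eps) * c + eps * eta)) * qf Ps x.
Proof.
move=> eps_ge0 S_ge /andP[eta_ge0 eta_le] P_psd P_le D_le; rewrite qfD.
have c_ge1 : 1 <= 1 + c by lra.
have := qf_riccati_le_scale x P_psd c_ge1 P_le.
have : 0 <= (c - eta) * (qf S x - eps * qf Ps x) by rewrite mulr_ge0 ?subr_ge0.
have := D_le x; lra.
Qed.

(* The comparison with [Ps] needs a nonnegative scale, hence
   [Num.max (1 - c) 0] in place of [1 - c]. *)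
Lemma qf_perturbed_riccati_ge eps eta P D c x :
  0 <= eps <= 1 -> (forall y, eps * qf Ps y <= qf S y) -> 0 <= eta <= c -> eta <= 1 -> psd P ->
  (forall y, (1 - c) * qf Ps y <= qf P y) -> (forall y, - (eta * qf S y) <= qf D y) ->
  Num.max (1 - ((1 - eps) * c + eps * eta)) 0 * qf Ps x <= qf (riccati A B Rw P S + D) x.
Proof.
move=> /andP[eps_ge0 eps_le1] S_ge /andP[eta_ge0 eta_le] eta_le1 P_psd P_ge D_ge; rewrite qfD.
set s := Num.max (1 - c) 0.
have s_ge : 1 - c <= s by rewrite le_max lexx.
have s_ge0 : 0 <= s by rewrite le_max lexx orbT.
have s_le : s <= 1 - eta by rewrite ge_max; apply/andP; split; lra.
have P_ge_s y : s * qf Ps y <= qf P y.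
  rewrite /s /Num.max; case: ifP => _; first by rewrite mul0r psd_qf_ge0.
  exact: P_ge.
have s01 : 0 <= s <= 1 by rewrite s_ge0 /=; lra.
have := qf_riccati_ge_scale x P_psd s01 P_ge_s.
have : 0 <= (1 - s - eta) * (qf S x - eps * qf Ps x) by rewrite mulr_ge0 ?subr_ge0 ?S_ge //; lra.
have coef : Num.max (1 - ((1 - eps) * c + eps * eta)) 0 <= s + (1 - s - eta) * eps.
  have : 0 <= (1 - eps) * (c - (1 - s)) by rewrite mulr_ge0 ?subr_ge0 //; lra.
  have : 0 <= (1 - s - eta) * eps by rewrite mulr_ge0 // subr_ge0; lra.
  by move=> ? ?; rewrite ge_max; apply/andP; split; lra.
have := ler_wpM2r (psd_qf_ge0 psd_Ps x) coef; have := D_ge x; lra.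
Qed.

Lemma perturbed_riccati_step eps eta P D c :
  0 <= eps <= 1 -> (forall y, eps * qf Ps y <= qf S y) -> S^T = S ->
  0 <= eta <= c -> eta <= 1 -> psd P -> (forall y, `|qf (P - Ps) y| <= c * qf Ps y) ->
  D^T = D -> (forall y, `|qf D y| <= eta * qf S y) ->
  psd (riccati A B Rw P S + D) /\
  forall y, `|qf (riccati A B Rw P S + D - Ps) y| <= ((1 - eps) * c + eps * eta) * qf Ps y.
Proof.
move=> eps01 S_ge sS eta_c eta_le1 P_psd P_near sD D_small.
have P_le y : qf P y <= (1 + c) * qf Ps y.
  by move: (P_near y); rewrite qfB ler_norml => /andP[_]; lra.
have P_ge y : (1 - c) * qf Ps y <= qf P y.
  by move: (P_near y); rewrite qfB ler_norml => /andP[+ _]; lra.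
have D_le y : qf D y <= eta * qf S y by move: (D_small y); rewrite ler_norml => /andP[].
have D_ge y : - (eta * qf S y) <= qf D y by move: (D_small y); rewrite ler_norml => /andP[].
have up y := qf_perturbed_riccati_le y (proj1 (andP eps01)) S_ge eta_c P_psd P_le D_le.
have lo y := qf_perturbed_riccati_ge y eps01 S_ge eta_c eta_le1 P_psd P_ge D_ge.
split.
  split; first by rewrite /sym_mx linearD /= riccati_sym ?sD ?(proj1 P_psd).
  move=> y; apply: le_trans (lo y).
  by rewrite mulr_ge0 ?psd_qf_ge0 // le_max lexx orbT.
move=> y; rewrite qfB ler_norml; have := up y; have := lo y.
have : 1 - ((1 - eps) * c + eps * eta) <= Num.max (1 - ((1 - eps) * c + eps * eta)) 0.
  by rewrite le_max lexx.
have := psd_qf_ge0 psd_Ps y; move=> ? ? ? ?; apply/andP; split; nra.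
Qed.

Lemma perturbed_riccati_iterate eps eta u (D P : nat -> 'M[R]_n) :
  0 <= eps <= 1 -> (forall y, eps * qf Ps y <= qf S y) -> S^T = S ->
  0 <= eta <= 1 -> 0 <= u ->
  (forall i, (D i)^T = D i) -> (forall i y, `|qf (D i) y| <= eta * qf S y) ->
  psd (P 0%N) -> (forall y, `|qf (P 0%N - Ps) y| <= u * qf Ps y) ->
  (forall i, P i.+1 = riccati A B Rw (P i) S + D i) ->
  forall k, psd (P k) /\
    forall y, `|qf (P k - Ps) y| <= ((1 - eps) ^+ k * u + eta) * qf Ps y.
Proof.
move=> eps01 S_ge sS /andP[eta_ge0 eta_le1] u_ge0 sD D_small P0_psd P0_near P_rec.
have rho_ge0 : 0 <= 1 - eps by rewrite subr_ge0; case/andP: eps01.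
elim=> [|k [Pk_psd Pk_near]].
  split=> // y; apply: le_trans (P0_near y) _.
  by rewrite expr0 mul1r ler_wpM2r ?psd_qf_ge0 ?lerDl.
have eta_c : 0 <= eta <= (1 - eps) ^+ k * u + eta.
  by rewrite eta_ge0 lerDr mulr_ge0 ?exprn_ge0.
have [next_psd next_near] := perturbed_riccati_step eps01 S_ge sS eta_c eta_le1
  Pk_psd Pk_near (sD k) (D_small k).
rewrite P_rec; split=> // y; apply: le_trans (next_near y) _.
by rewrite exprS; apply: ler_wpM2r; rewrite ?psd_qf_ge0 //; lra.
Qed.
End Riccati.

(** * Comparison functions *)

Lemma class_K_scale (R : realType) (c : R) : 0 < c -> class_K (fun r => c * r).
Proof.
move=> c_gt0; split; first by rewrite mulr0.
split; first by move=> r r_ge0; rewrite mulr_ge0 // ltW.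
split; first by apply: continuous_subspaceT; exact: mulrl_continuous.
by move=> r s _ rs; rewrite ltr_pM2l.
Qed.

Lemma class_KL_geometric (R : realType) (c q : R) : 0 < c -> 0 < q < 1 ->
  class_KL (fun r k => c * q ^+ k * r).
Proof.
move=> c_gt0 /andP[q_gt0 q_lt1]; split=> [k|r r_ge0].
  by apply: class_K_scale; rewrite mulr_gt0 // exprn_gt0.
split=> [i j ij|].
  apply: ler_wpM2r => //; apply: ler_wpM2l; first exact: ltW.
  by apply: ler_wiXn2l; rewrite ?ltW.
have : (fun k => c * q ^+ k * r) @ \oo --> c * 0 * r.
  by apply: cvgMl; apply: cvgMr; apply: cvg_expr; rewrite gtr0_norm.
by rewrite mulr0 mul0r.
Qed.

(** * Inexact value iteration *)

Lemma supnorm_fin (R : realType) n (D : nat -> 'M[R]_n) a : (supnorm D < a%:E)%E ->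
  exists2 d, supnorm D = d%:E & forall i, opnorm (D i) <= d.
Proof.
have D_le i : ((opnorm (D i))%:E <= supnorm D)%E by apply: ereal_sup_ubound; exists i.
case E : (supnorm D) => [d| |] // _; first by exists d => // i; rewrite -lee_fin -E.
by move: (D_le 0%N); rewrite E.
Qed.

Lemma inexact_value_iteration_bound (R : realType) n m (A : 'M[R]_n) (B : 'M[R]_(n, m))
    (S : 'M[R]_n) (Rw : 'M[R]_m) (Ps : 'M[R]_n) (D P : nat -> 'M[R]_n) (C d : R) :
  (0 < n)%N -> pd S -> pd Rw -> pd Ps -> Ps = riccati A B Rw Ps S ->
  opnorm Ps <= C -> lambda_min S <= C -> 0 <= d < lambda_min S ->
  (forall i, (D i)^T = D i) -> (forall i, opnorm (D i) <= d) -> psd (P 0%N) ->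
  (forall i, P i.+1 = riccati A B Rw (P i) S + D i) ->
  forall k, opnorm (P k - Ps) <=
    C / lambda_min S * ((1 - lambda_min S / C) ^+ k * opnorm (P 0%N - Ps) + d).
Proof.
move=> n_gt0 pd_S pd_Rw pd_Ps Ps_fix Ps_le sig_le /andP[d_ge0 d_lt] sD D_le P0_psd P_rec k.
set sig := lambda_min S in sig_le d_lt *; set r := opnorm (P 0%N - Ps).
have sig_gt0 : 0 < sig := pd_lambda_min_gt0 n_gt0 pd_S.
have C_gt0 : 0 < C by apply: lt_le_trans sig_le.
have psd_Ps := pd_psd pd_Ps.
have S_ge_sig y : sig * nrm2 y <= qf S y := lambda_min_le_qf y n_gt0 (proj1 pd_S).
have Ps_ge_sig y : sig * nrm2 y <= qf Ps y.
  exact: le_trans (S_ge_sig y) (qf_le_fixpoint pd_Rw psd_Ps Ps_fix y).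
have Ps_le_C y : qf Ps y <= C * nrm2 y.
  have := normr_qf_le Ps y; rewrite ler_norml => /andP[_ /le_trans]; apply.
  by rewrite ler_wpM2r ?nrm2_ge0.
set eps := sig / C; set eta := d / sig; set u := r / sig.
have eps01 : 0 <= eps <= 1.
  by rewrite /eps divr_ge0 ?(ltW sig_gt0) ?(ltW C_gt0) //= ler_pdivrMr ?mul1r.
have S_ge y : eps * qf Ps y <= qf S y.
  have eC : eps * C = sig by rewrite divfK ?lt0r_neq0.
  apply: le_trans (S_ge_sig y); rewrite -eC -mulrA.
  by apply: ler_wpM2l; [case/andP: eps01 | exact: Ps_le_C].
have eta01 : 0 <= eta <= 1.
  by rewrite /eta divr_ge0 ?(ltW sig_gt0) //= ler_pdivrMr // mul1r (ltW d_lt).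
have u_ge0 : 0 <= u by rewrite /u divr_ge0 ?opnorm_ge0 ?(ltW sig_gt0).
have D_small i y : `|qf (D i) y| <= eta * qf S y.
  apply: le_trans (normr_qf_le_dominated (D i) y sig_gt0 S_ge_sig) _.
  apply: ler_wpM2r; first exact: psd_qf_ge0 (pd_psd pd_S) y.
  by rewrite /eta ler_pM2r ?invr_gt0.
have P0_near y : `|qf (P 0%N - Ps) y| <= u * qf Ps y.
  exact: normr_qf_le_dominated y sig_gt0 Ps_ge_sig.
have [Pk_psd Pk_near] := perturbed_riccati_iterate pd_Rw psd_Ps Ps_fix eps01 S_ge
  (proj1 pd_S) eta01 u_ge0 sD D_small P0_psd P0_near P_rec k.
set ck := (1 - eps) ^+ k * u + eta.
have ck_ge0 : 0 <= ck.
  have [_ eps_le1] := andP eps01; have [eta_ge0 _] := andP eta01.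
  by rewrite /ck addr_ge0 // mulr_ge0 // exprn_ge0 // subr_ge0.
have -> : C / sig * ((1 - eps) ^+ k * r + d) = ck * C.
  by rewrite /ck /u /eta; field; exact: lt0r_neq0.
apply: sym_opnorm_le; first by rewrite linearB /= (proj1 Pk_psd) (proj1 psd_Ps).
  exact: mulr_ge0 ck_ge0 (ltW C_gt0).
move=> y; apply: le_trans (Pk_near y) _.
by rewrite -mulrA; apply: ler_wpM2l; [exact: ck_ge0 | exact: Ps_le_C].
Qed.

Theorem theorem3 (R : realType) (n m : nat)
  (A : 'M[R]_n) (B : 'M[R]_(n, m)) (S : 'M[R]_n) (Rw : 'M[R]_m)
  (Pstar : 'M[R]_n) :
  (0 < n)%N -> (0 < m)%N ->
  pd S -> pd Rw -> stabilizable A B ->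
  pd Pstar -> Pstar = riccati A B Rw Pstar S ->
  (forall P : 'M[R]_n, pd P -> P = riccati A B Rw P S -> P = Pstar) ->
  exists (beta : R -> nat -> R) (gamma : R -> R),
    class_KL beta /\ class_K gamma /\
    forall (Delta : nat -> 'M[R]_n) (Phat : nat -> 'M[R]_n),
      (forall i, sym_mx (Delta i)) ->
      (supnorm Delta < (lambda_min S)%:E)%E ->
      psd (Phat 0%N) ->
      (forall i, Phat i.+1 = riccati A B Rw (Phat i) S + Delta i) ->
      forall i : nat,
        opnorm (Phat i - Pstar) <=
          beta (opnorm (Phat 0%N - Pstar)) i + gamma (fine (supnorm Delta)).
Proof.
move=> n_gt0 _ pd_S pd_Rw _ pd_Ps Ps_fix _.
set sig := lambda_min S; set C := Num.max (opnorm Pstar) sig.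
have sig_gt0 : 0 < sig := pd_lambda_min_gt0 n_gt0 pd_S.
have sig_le : sig <= C by rewrite le_max lexx orbT.
have eps_gt0 : 0 < sig / C by rewrite divr_gt0 // (lt_le_trans sig_gt0).
have eps_le1 : sig / C <= 1 by rewrite ler_pdivrMr ?mul1r // (lt_le_trans sig_gt0).
(* [1 - sig / C] vanishes when [C = sig]; the slower rate [q] keeps [beta]
   of class KL. *)
set q := 1 - sig / C / 2.
have q01 : 0 < q < 1 by rewrite /q; apply/andP; split; lra.
have K_gt0 : 0 < C / sig by rewrite divr_gt0 // (lt_le_trans sig_gt0).
exists (fun r k => C / sig * q ^+ k * r), (fun d => C / sig * d).
split; first exact: class_KL_geometric.
split; first exact: class_K_scale.
move=> D P sD D_lt P0_psd P_rec k.
have [d dE D_le] := supnorm_fin D_lt; rewrite dE lte_fin in D_lt; rewrite dE /=.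
have d_ge0 : 0 <= d := le_trans (opnorm_ge0 _) (D_le 0%N).
have d01 : 0 <= d < sig by rewrite d_ge0 D_lt.
have Ps_le : opnorm Pstar <= C by rewrite le_max lexx.
apply: le_trans (inexact_value_iteration_bound n_gt0 pd_S pd_Rw pd_Ps Ps_fix Ps_le sig_le d01
  sD D_le P0_psd P_rec k) _.
rewrite mulrDr lerD2r -[leRHS]mulrA; apply: (ler_wpM2l (ltW K_gt0)).
apply: (ler_wpM2r (opnorm_ge0 _)).
by apply: lerXn2r; rewrite ?nnegrE /q; lra.
Qed.
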